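(* Let $d\ge2$. There exist positive constants $c^-=c^-(d)$ and $c^+=c^+(d)$ such that, for $\mathbf p=(p_1,\dots,p_d)$: (i) with high probability $\mathcal G(n,\mathbf p)$ is not topologically connected if $p_k\le\frac{c^-\log n}{n^k}$ for all $k\in[d]$; (ii) with high probability $\mathcal G(n,\mathbf p)$ is topologically connected if $p_k\ge\frac{c^+\log n}{n^k}$ for some $k\in[d]$.
   Context: $\mathcal G(n,\mathbf p)$: random simplicial complex on $[n]$ where for each $k\in[d]$ each $(k+1)$-subset of $[n]$ independently is an edge with probability $p_k\in[0,1]$; the complex consists of all singletons and all nonempty subsets of edges. Topologically connected means connected as a topological space (equivalently, the underlying hypergraph is vertex-connected). Whp = with probability tending to $1$ as $n\to\infty$. *)

From HB Require Import structures.
From mathcomp Require Import all_boot all_order all_algebra.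
From mathcomp Require Import all_classical all_reals all_analysis.
From mathcomp Require Import Rstruct Rstruct_topology.
Set Implicit Arguments. Unset Strict Implicit. Unset Printing Implicit Defensive.
Import Order.TTheory GRing.Theory Num.Theory.
Local Open Scope ring_scope.
Notation R := Rdefinitions.R.

(* A configuration of the random complex G(n,p) on vertex set 'I_n:
   x S = true  means the subset S is drawn as an edge. *)
Definition conf (n : nat) := {ffun {set 'I_n} -> bool}.

(* S is a potential edge of G(n,p) with p = (p_1..p_d): a (k+1)-subset, k in [d]. *)
Definition edge_size_ok (d n : nat) (S : {set 'I_n}) : bool :=
  (2 <= #|S| <= d.+1)%N.

Definition weight (d : nat) (q : nat -> R) (n : nat) (x : conf n) : R :=
  \prod_(S : {set 'I_n})
     (if edge_size_ok d S
      then (if x S then q (#|S|.-1) else 1 - q (#|S|.-1))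
      else (if x S then 0 else 1)).

Definition prob (d : nat) (q : nat -> R) (n : nat) (E : pred (conf n)) : R :=
  \sum_(x : conf n | E x) weight d q x.

Definition adj (d n : nat) (x : conf n) : rel 'I_n :=
  fun u v => [exists S : {set 'I_n}, [&& x S, edge_size_ok d S, u \in S & v \in S]].

(* Topologically connected = underlying hypergraph vertex-connected. *)
Definition top_connected (d n : nat) (x : conf n) : bool :=
  [forall u : 'I_n, [forall v : 'I_n, connect (adj d x) u v]].

(* If the complex is disconnected, some vertex set A with 1 <= |A| <= n/2 is
   crossed by no edge.  For a fixed A at least |A| C(n - |A|, k) of the
   (k+1)-sets cross A, so a union bound over A gives
   P(disconnected) <= (1 + z)^n - 1 with z = (1 - p_k)^C(n - n/2, k).  As
   C(n - n/2, k) >= n^k / (4^d d!), the constant c+ = 2 4^d d! makes z <= n^-2,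
   whence P(disconnected) <= 2/n.
   Conversely, let c- = 1/(4e).  If every p_k <= c- log n / n^k, the expected
   number of edges through a vertex is at most (log n)/4, so each vertex is
   isolated with probability at least n^-1/2 and the number X of isolated
   vertices has E X >= sqrt n.  The edges through two given vertices have total
   probability O(log n / n), so isolations are almost independent:
   E X^2 <= E X + (E X)^2 (1 + O(log n / n)).  The second moment method gives
   P(X = 0) = O(1 / sqrt n), and an isolated vertex disconnects the complex. *)

From HB Require Import structures.
From mathcomp Require Import all_boot all_order all_algebra.
From mathcomp Require Import all_classical all_reals all_analysis.
From mathcomp Require Import Rstruct Rstruct_topology.
(* Give finset's names precedence over their homonyms in classical_sets. *)
From mathcomp Require Import fintype finset.
From mathcomp Require Import ring lra zify.
Import Order.TTheory GRing.Theory Num.Theory.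
Local Open Scope ring_scope.
Local Notation R := Rdefinitions.R.
Import numFieldNormedType.Exports.
Set Implicit Arguments. Unset Strict Implicit. Unset Printing Implicit Defensive.

Definition edge_free (n : nat) (F : {set 'I_n} -> bool) (x : conf n) : bool :=
  [forall S, F S ==> ~~ x S].

Definition crosses (n : nat) (A S : {set 'I_n}) : bool :=
  ~~ [disjoint S & A] && ~~ (S \subset A).

Definition no_crossing (d n : nat) (A : {set 'I_n}) : pred (conf n) :=
  edge_free (fun S => crosses A S && edge_size_ok d S).

Definition isolated_vertex (n : nat) (x : conf n) (u : 'I_n) : bool :=
  edge_free (fun S => u \in S) x.

Lemma edge_size_ok_dim (d n : nat) (S : {set 'I_n}) :
  edge_size_ok d S -> (1 <= #|S|.-1 <= d)%N.
Proof. by rewrite /edge_size_ok => /andP[? ?]; apply/andP; split; lia. Qed.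

Section Probability.
Variables (d n : nat) (q : nat -> R).
Hypothesis q01 : forall k, (1 <= k <= d)%N -> 0 <= q k <= 1.

Definition edge_prob (S : {set 'I_n}) : R := q #|S|.-1.

Definition edge_factor (S : {set 'I_n}) (b : bool) : R :=
  if edge_size_ok d S then (if b then edge_prob S else 1 - edge_prob S)
  else (if b then 0 else 1).

Definition expect (X : conf n -> R) : R := \sum_x weight d q x * X x.

Lemma edge_factor_ge0 S b : 0 <= edge_factor S b.
Proof.
rewrite /edge_factor /edge_prob.
by case: ifP => [/edge_size_ok_dim/q01/andP[? ?]|_]; case: b => //; lra.
Qed.

Lemma sum_edge_factor S : \sum_b edge_factor S b = 1.
Proof. by rewrite big_bool /edge_factor; case: ifP => _ /=; lra. Qed.

Lemma weight_ge0 (x : conf n) : 0 <= weight d q x.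
Proof. by apply: prodr_ge0 => S _; apply: edge_factor_ge0. Qed.

Lemma eq_prob (E1 E2 : pred (conf n)) : E1 =1 E2 -> prob d q E1 = prob d q E2.
Proof. by move=> E12; apply: eq_bigl. Qed.

Lemma probE (E : pred (conf n)) : prob d q E = expect (fun x => (E x)%:R).
Proof.
rewrite /prob big_mkcond; apply: eq_bigr => x _.
by case: (E x); rewrite ?mulr1 ?mulr0.
Qed.

Lemma expect_sum (I : finType) (F : I -> conf n -> R) :
  expect (fun x => \sum_i F i x) = \sum_i expect (F i).
Proof. by rewrite /expect; under eq_bigr do rewrite mulr_sumr; apply: exchange_big. Qed.

Lemma expect_sum_indicators (I : finType) (E : I -> pred (conf n)) :
  expect (fun x => \sum_i (E i x)%:R) = \sum_i prob d q (E i).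
Proof. by rewrite expect_sum; apply: eq_bigr => i _; rewrite probE. Qed.

Lemma expect_sqr_sum_indicators (I : finType) (E : I -> pred (conf n)) :
  expect (fun x => (\sum_i (E i x)%:R) ^+ 2) =
  \sum_i \sum_j prob d q (fun x => E i x && E j x).
Proof.
under [X in expect X]funext => x.
  rewrite expr2 mulr_suml; under eq_bigr => i _ do rewrite mulr_sumr.
  under eq_bigr => i _ do under eq_bigr => j _ do rewrite -natrM mulnb.
  over.
by rewrite expect_sum; apply: eq_bigr => i _; apply: expect_sum_indicators.
Qed.

Lemma prob_forall_edges (G : {set 'I_n} -> bool -> bool) :
  prob d q (fun x : conf n => [forall S, G S (x S)]) =
  \prod_S \sum_b (if G S b then edge_factor S b else 0).
Proof.
rewrite bigA_distr_bigA /prob [RHS](bigID (fun x : conf n => [forall S, G S (x S)])) /=.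
rewrite [X in _ = _ + X]big1 ?addr0.
  by apply: eq_bigr => x /forallP GS; apply: eq_bigr => S _; rewrite GS.
by move=> x /forallPn[S GSn]; rewrite (bigD1 S) //= (negbTE GSn) mul0r.
Qed.

Lemma prob_ge0 (E : pred (conf n)) : 0 <= prob d q E.
Proof. by apply: sumr_ge0 => x _; apply: weight_ge0. Qed.

Lemma le_prob (E1 E2 : pred (conf n)) :
  (forall x, E1 x -> E2 x) -> prob d q E1 <= prob d q E2.
Proof.
move=> E12; rewrite /prob [leRHS](bigID E1) /=.
have -> : \sum_(x | E2 x && E1 x) weight d q x = \sum_(x | E1 x) weight d q x.
  by apply: eq_bigl => x; case E1x: (E1 x); rewrite ?andbT ?andbF ?E12.
by rewrite lerDl; apply: sumr_ge0 => x _; apply: weight_ge0.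
Qed.

Lemma prob_predT : prob d q (predT : pred (conf n)) = 1.
Proof.
have := prob_forall_edges (fun _ _ => true); rewrite big1 => [<-|S _].
  by apply: eq_prob => x; apply/esym/forallP.
exact: sum_edge_factor.
Qed.

Lemma prob_add_compl (E : pred (conf n)) :
  prob d q E + prob d q (fun x => ~~ E x) = 1.
Proof. by rewrite -prob_predT /prob [in RHS](bigID E). Qed.

Lemma prob_le1 (E : pred (conf n)) : prob d q E <= 1.
Proof. by have := prob_add_compl E; have := prob_ge0 (fun x => ~~ E x); lra. Qed.

Lemma prob_edge_free (F : {set 'I_n} -> bool) : prob d q (edge_free F) =
  \prod_S (1 - (if F S && edge_size_ok d S then edge_prob S else 0)).
Proof.
rewrite (prob_forall_edges (fun S b => F S ==> ~~ b)); apply: eq_bigr => S _.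
by rewrite big_bool /edge_factor; case: (F S); case: (edge_size_ok d S) => /=; lra.
Qed.

(* On the event [X = 0] the deviation [(X - E X)^2] equals [(E X)^2]. *)
Lemma second_moment_method (X : conf n -> R) :
  prob d q (fun x => X x == 0) * expect X ^+ 2 <=
  expect (fun x => X x ^+ 2) - expect X ^+ 2.
Proof.
set mu := expect X.
have -> : expect (fun x => X x ^+ 2) - mu ^+ 2 = expect (fun x => (X x - mu) ^+ 2).
  have Ew1 : \sum_(x : conf n) weight d q x = 1.
    by rewrite -prob_predT /prob; apply: eq_bigl.
  rewrite [RHS](eq_bigr (fun x => weight d q x * X x ^+ 2
    - 2 * mu * (weight d q x * X x) + mu ^+ 2 * weight d q x)) => [|x _]; last by ring.
  rewrite big_split sumrB /= -!mulr_sumr Ew1 -/(expect X) -/mu.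
  by rewrite [in LHS]/expect /=; ring.
rewrite probE /expect mulr_suml; apply: ler_sum => x _.
rewrite -mulrA; apply: ler_wpM2l; first exact: weight_ge0.
by case: eqP => [->|_]; rewrite ?mul1r ?sub0r ?sqrrN ?mul0r ?sqr_ge0.
Qed.

End Probability.

Lemma sum_expr_card (T : finType) (t : R) :
  \sum_(B : {set T}) t ^+ #|B| = (1 + t) ^+ #|T|.
Proof.
have -> : (1 + t) ^+ #|T| = \prod_(i : T) \sum_(b : bool) (if b then t else 1).
  by rewrite -prodr_const; apply: eq_bigr => i _; rewrite big_bool addrC.
rewrite bigA_distr_bigA (reindex (fun A : {set T} => [ffun i => i \in A])) /=.
  apply: eq_bigr => A _; rewrite -prodr_const [LHS]big_mkcond /=.
  by apply: eq_bigr => i _; rewrite ffunE.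
exists (fun f : {ffun T -> bool} => [set i | f i]) => [A _|f _].
  by apply/setP => i; rewrite inE ffunE.
by apply/ffunP => i; rewrite ffunE inE.
Qed.

Lemma ler_sum_subpred (T : finType) (P Q : pred T) (g : T -> R) :
  (forall x, 0 <= g x) -> (forall x, P x -> Q x) ->
  \sum_(x | P x) g x <= \sum_(x | Q x) g x.
Proof.
move=> g0 PQ; rewrite big_mkcond [leRHS]big_mkcond /=; apply: ler_sum => x _.
by case Px: (P x); rewrite ?(PQ _ Px) //; case: (Q x).
Qed.

Lemma sum_supersets_le (T : finType) (A : {set T}) (g : nat -> R) :
  (forall k, 0 <= g k) ->
  \sum_(S : {set T} | A \subset S) g #|S :\: A| <= \sum_(B : {set T}) g #|B|.
Proof.
move=> g0.
have inj : {in [set S : {set T} | A \subset S] &, injective (fun S => S :\: A)}.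
  move=> S1 S2; rewrite !inE => AS1 AS2 eqD.
  by rewrite -(setID S1 A) -(setID S2 A) eqD (setIidPr AS1) (setIidPr AS2).
rewrite (eq_bigl (fun S => S \in [set S : {set T} | A \subset S])) => [|S].
  by rewrite -(big_imset (fun B : {set T} => g #|B|) inj); apply: ler_sum_subpred.
by rewrite inE.
Qed.

Lemma expn_le_ffact k j : (j.+1 ^ k <= (j + k) ^_ k)%N.
Proof.
elim: k j => [|k IH] j; first by rewrite expn0 ffactn0.
by rewrite addnS ffactSS expnS leq_mul //; lia.
Qed.

Section Connectivity.
Variables (d n : nat).

Lemma adj_sym (x : conf n) : symmetric (adj d x).
Proof.
by move=> u v; apply/existsP/existsP => -[S /and4P[? ? ? ?]]; exists S; apply/and4P.
Qed.

Lemma isolated_vertex_disconnected (x : conf n) u :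
  (1 < n)%N -> isolated_vertex x u -> ~~ top_connected d x.
Proof.
move=> n_gt1 iso_u.
have [v vu] : exists v : 'I_n, v != u.
  have : (0 < #|~: [set u]|)%N by rewrite cardsC1 card_ord; lia.
  by rewrite card_gt0 => /set0Pn[v]; rewrite !inE; exists v.
apply/negP => /forallP/(_ u)/forallP/(_ v)/connectP[[|w p] /=].
  by move=> _ vE; rewrite vE eqxx in vu.
case/andP => /existsP[S /and4P[xS _ uS _]] _ _.
by move/forallP: iso_u => /(_ S); rewrite uS xS.
Qed.

Lemma disconnected_cut (x : conf n) : ~~ top_connected d x ->
  exists A : {set 'I_n}, [&& (0 < #|A|)%N, (#|A|.*2 <= n)%N & no_crossing d A x].
Proof.
move/forallPn => [u /forallPn [v not_uv]].
pose C := [set w | connect (adj d x) u w].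
have closedC w w' : adj d x w w' -> (w \in C) = (w' \in C).
  move=> ww'; rewrite !inE; apply/idP/idP => uw.
    exact: connect_trans uw (connect1 ww').
  by apply: connect_trans uw (connect1 _); rewrite adj_sym.
have no_cross A : A = C \/ A = ~: C -> no_crossing d A x.
  move=> eqA; apply/forallP => S; apply/implyP => /andP[/andP[SA SnA] okS].
  apply/negP => xS.
  move: SA; rewrite -setI_eq0 => /set0Pn[w /setIP[wS wA]].
  case/subsetPn: SnA => w' w'S w'nA.
  have : adj d x w w' by apply/existsP; exists S; apply/and4P.
  move/closedC.
  case: eqA wA w'nA => ->; first by move=> -> /negPf ->.
  by rewrite !inE negbK => /negPf -> ->.
have uC : u \in C by rewrite inE connect0.
have vC : v \notin C by rewrite inE.
have cardC := cardsC C; rewrite card_ord in cardC.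
have [smallC|bigC] := leqP #|C|.*2 n.
  exists C; rewrite smallC no_cross ?andbT; last by left.
  by rewrite card_gt0; apply/set0Pn; exists u.
exists (~: C); rewrite no_cross ?andbT; last by right.
rewrite card_gt0; apply/andP; split; first by apply/set0Pn; exists v; rewrite inE.
by move: cardC bigC; rewrite -!muln2; move: #|C| #|~: C| => a b; lia.
Qed.

End Connectivity.

Lemma card_crossing (n k : nat) (A : {set 'I_n}) : (0 < k)%N ->
  (#|A| * 'C(n - #|A|, k) <= #|[set S | crosses A S && (#|S| == k.+1)]|)%N.
Proof.
move=> k_gt0.
pose D := setX A [set B : {set 'I_n} | (B \subset ~: A) && (#|B| == k)].
have cardD : #|D| = (#|A| * 'C(n - #|A|, k))%N.
  have := cardsC A; rewrite card_ord cardsX cards_draws => cardA.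
  by congr (_ * 'C(_, k))%N; lia.
have splitA v (B : {set 'I_n}) : v \in A -> B \subset ~: A ->
    (v |: B) :&: A = [set v] /\ (v |: B) :\: A = B.
  rewrite subsets_disjoint setCK => vA BA.
  have vA0 : [set v] :\: A = set0 by apply/eqP; rewrite setD_eq0 sub1set.
  rewrite setIUl setDUl (disjoint_setI0 BA) (setDidPl BA) setU0 vA0 set0U.
  by rewrite (setIidPl _) ?sub1set.
have inj : {in D &, injective (fun vB : 'I_n * {set 'I_n} => vB.1 |: vB.2)}.
  move=> [v B] [v' B']; rewrite !inE /=.
  move=> /andP[vA /andP[BA _]] /andP[v'A /andP[B'A _]] eqS.
  have [Iv Dv] := splitA _ _ vA BA; have [Iv' Dv'] := splitA _ _ v'A B'A.
  by rewrite eqS Iv' in Iv; rewrite eqS Dv' in Dv; rewrite (set1_inj Iv) Dv.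
rewrite -cardD -(card_in_imset inj); apply: subset_leq_card; apply/subsetP => S.
case/imsetP => -[v B]; rewrite !inE /= => /andP[vA /andP[BA /eqP cardB]] ->.
have [Iv Dv] := splitA _ _ vA BA.
have vB : v \notin B by apply: contraL vA => /(subsetP BA); rewrite inE.
rewrite /crosses -setI_eq0 Iv -setD_eq0 Dv cardsU1 vB cardB eqxx andbT.
by rewrite -!card_gt0 cards1 cardB k_gt0.
Qed.

Section CutBounds.
Variables (d n : nat) (q : nat -> R).
Hypothesis q01 : forall k, (1 <= k <= d)%N -> 0 <= q k <= 1.

Lemma prob_no_crossing_le k (A : {set 'I_n}) : (1 <= k <= d)%N ->
  prob d q (no_crossing d A) <= ((1 - q k) ^+ 'C(n - #|A|, k)) ^+ #|A|.
Proof.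
move=> kd; have /andP[qk0 qk1] := q01 kd.
rewrite prob_edge_free.
pose F S := crosses A S && (#|S| == k.+1).
apply: (@le_trans _ _ (\prod_S (if F S then 1 - q k else 1))).
  apply: ler_prod => S _; have [/andP[crossS /eqP cardS]|_] := boolP (F S).
    have okS : edge_size_ok d S by rewrite /edge_size_ok cardS; lia.
    by rewrite crossS okS /edge_prob cardS /=; apply/andP; split; lra.
  case: ifP => [/andP[_ /edge_size_ok_dim/q01/andP[? ?]]|_]; rewrite /edge_prob;
    by apply/andP; split; lra.
rewrite -big_mkcond /= (eq_bigl (fun S => S \in [set S | F S])) => [|S]; last first.
  by rewrite inE.
rewrite prodr_const -exprM mulnC; apply: ler_wiXn2l; try lra.
by apply: card_crossing; case/andP: kd.
Qed.

Lemma prob_disconnected_le_cuts :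
  prob d q (fun x : conf n => ~~ top_connected d x) <=
  \sum_(A : {set 'I_n} | (0 < #|A|)%N && (#|A|.*2 <= n)%N)
    prob d q (no_crossing d A).
Proof.
set cut := fun A : {set 'I_n} => (0 < #|A|)%N && (#|A|.*2 <= n)%N.
have w0 := weight_ge0 q01.
apply: (@le_trans _ _
  (\sum_(x : conf n) \sum_(A | cut A && no_crossing d A x) weight d q x)).
  apply: (le_trans _ (ler_sum_subpred _ (fun x _ => isT))) => [|x]; last first.
    by apply: sumr_ge0 => A _; apply: w0.
  apply: ler_sum => x /disconnected_cut[A /and3P[A0 A2 noA]].
  rewrite (bigD1 A) /=; last by rewrite /cut A0 A2.
  by rewrite lerDl; apply: sumr_ge0 => B _; apply: w0.
under eq_bigr do rewrite big_mkcondr /=.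
by rewrite exchange_big /=; apply: ler_sum => A _; rewrite /prob [leRHS]big_mkcond.
Qed.

Lemma prob_disconnected_le_expr (z : R) : 0 <= z ->
  (forall A : {set 'I_n}, (0 < #|A|)%N -> (#|A|.*2 <= n)%N ->
     prob d q (no_crossing d A) <= z ^+ #|A|) ->
  prob d q (fun x : conf n => ~~ top_connected d x) <= (1 + z) ^+ n - 1.
Proof.
move=> z0 noA_le.
apply: (le_trans prob_disconnected_le_cuts).
apply: (@le_trans _ _ (\sum_(A : {set 'I_n} | A != set0) z ^+ #|A|)).
  apply: (@le_trans _ _ (\sum_(A : {set 'I_n} | (0 < #|A|)%N && (#|A|.*2 <= n)%N) z ^+ #|A|)).
    by apply: ler_sum => A /andP[]; apply: noA_le.
  apply: ler_sum_subpred => [A|A /andP[]]; first exact: exprn_ge0.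
  by rewrite card_gt0.
rewrite -[n in (1 + z) ^+ n]card_ord -sum_expr_card [X in _ <= X - 1](bigD1 set0) //=.
by rewrite cards0 expr0 addrC addrK.
Qed.

End CutBounds.

Lemma expn_le_bin_half (n k : nat) : (4 * k <= n)%N ->
  (n ^ k <= 4 ^ k * k`! * 'C(n - n %/ 2, k))%N.
Proof.
move=> kn; have [->|k_gt0] := posnP k; first by rewrite !expn0 bin0.
set m := (n - n %/ 2)%N.
have km : (k <= m)%N by rewrite /m; lia.
have ffact_le : ((m - k).+1 ^ k <= k`! * 'C(m, k))%N.
  by rewrite mulnC bin_ffact -{2}(subnK km) expn_le_ffact.
apply: (@leq_trans ((4 * (m - k).+1) ^ k)); first by rewrite leq_exp2r ?/m; lia.
by rewrite expnMn -mulnA leq_mul2l ffact_le orbT.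
Qed.

Lemma expr1B_le_expR (x : R) (m : nat) : x <= 1 ->
  (1 - x) ^+ m <= expR (- (x * m%:R)).
Proof.
move=> x1; rewrite mulrC -mulrN expRM_natl.
apply: lerXn2r; rewrite ?nnegrE ?subr_ge0 ?(ltW (expR_gt0 _)) //.
exact: expR_ge1Dx.
Qed.

Lemma expr1D_le (z : R) (n : nat) : 0 <= z -> n%:R * z <= 1/2 ->
  (1 + z) ^+ n <= 1 + 2 * (n%:R * z).
Proof.
move=> z0 nz.
apply: (@le_trans _ _ (expR z ^+ n)).
  apply: lerXn2r; rewrite ?nnegrE ?(ltW (expR_gt0 _)) ?addr_ge0 //.
  exact: expR_ge1Dx.
rewrite -expRM_natl; move: nz (mulr_ge0 (ler0n _ n) z0).
move: (n%:R * z) => y y12 y0.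
have := expR_ge1Dx (- y); rewrite expRN => h.
have ey0 := expR_gt0 y.
have hy : (1 - y) * expR y <= 1.
  by have := ler_wpM2r (ltW ey0) h; rewrite mulVf ?gt_eqF.
have y1 : 0 < 1 - y by lra.
rewrite -(ler_pM2l y1); apply: (le_trans hy).
nra.
Qed.

Lemma prob_disconnected_le (d n k : nat) (q : nat -> R) :
  (forall k, (1 <= k <= d)%N -> 0 <= q k <= 1) ->
  (1 <= k <= d)%N -> (4 * d <= n)%N -> (2 <= n)%N ->
  2 * (4 ^ d * d`!)%N%:R * ln n%:R / n%:R ^+ k <= q k ->
  prob d q (fun x : conf n => ~~ top_connected d x) <= 2 / n%:R.
Proof.
move=> q01 kd dn n2 qk_ge; have /andP[qk0 qk1] := q01 _ kd.
have n0 : (0 : R) < n%:R by rewrite ltr0n; lia.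
set K := (4 ^ d * d`!)%N; set Cm := 'C(n - n %/ 2, k).
have nk_le : (n%:R ^+ k : R) <= K%:R * Cm%:R.
  rewrite -natrX -natrM ler_nat (leq_trans (expn_le_bin_half _)) //; first lia.
  by rewrite leq_mul2r leq_mul ?leq_pexp2l ?leq_fact ?orbT //; lia.
have two_ln_le : 2 * ln n%:R <= q k * Cm%:R.
  have nk0 : (0 : R) < n%:R ^+ k by rewrite exprn_gt0.
  apply: le_trans (ler_wpM2r (ler0n _ Cm) qk_ge).
  have -> : 2 * K%:R * ln (n%:R : R) / n%:R ^+ k * Cm%:R =
      2 * ln (n%:R : R) * (K%:R * Cm%:R / n%:R ^+ k) by ring.
  apply: ler_peMr; first by rewrite mulr_ge0 // ln_ge0 // ler1n; lia.
  by rewrite ler_pdivlMr // mul1r.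
set z := (1 - q k) ^+ Cm.
have z0 : 0 <= z by rewrite exprn_ge0 // subr_ge0.
have nz_le : n%:R * z <= n%:R^-1.
  have -> : n%:R^-1 = n%:R * expR (- (2 * ln (n%:R : R))).
    by rewrite expRN -[2]/(2%:R) expRM_natl lnK ?posrE // expr2 invfM mulVKf ?gt_eqF.
  rewrite ler_pM2l // (le_trans (expr1B_le_expR _ qk1)) // ler_expR lerN2 //.
apply: (@le_trans _ _ ((1 + z) ^+ n - 1)).
  apply: prob_disconnected_le_expr => // A A0 A2.
  apply: (le_trans (prob_no_crossing_le q01 A kd)).
  apply: lerXn2r; rewrite ?nnegrE ?exprn_ge0 ?subr_ge0 //.
  apply: ler_wiXn2l; rewrite ?subr_ge0 ?lerBlDr ?lerDl //.
  by apply: leq_bin2l; move: A2; rewrite -muln2; lia.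
have n_inv : n%:R^-1 <= 1 / 2 :> R by rewrite div1r lef_pV2 ?posrE ?ler_nat.
rewrite lerBlDl; apply: (le_trans (expr1D_le (n := n) z0 _)); first lra.
by rewrite lerD2l mulrC -ler_pdivlMr //; lra.
Qed.

Lemma prod_1B_ge (I : finType) (a : I -> R) :
  (forall i, 0 <= a i <= 1) -> 1 - \sum_i a i <= \prod_i (1 - a i).
Proof.
move=> a01.
suff [] : 0 <= \sum_i a i /\ 1 - \sum_i a i <= \prod_i (1 - a i) by [].
elim/big_rec2: _ => [|i s p _ [s0 IH]]; first by split; lra.
have /andP[ai0 ai1] := a01 i.
have : (1 - a i) * (1 - s) <= (1 - a i) * p by apply: ler_wpM2l; lra.
by split; nra.
Qed.

Lemma prod_1B_ge_expR (I : finType) (a : I -> R) :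
  (forall i, 0 <= a i <= 1/2) -> expR (- (2 * \sum_i a i)) <= \prod_i (1 - a i).
Proof.
move=> a_half; rewrite mulr_sumr -sumrN expR_sum; apply: ler_prod => i _.
have /andP[ai0 ai1] := a_half i.
rewrite (ltW (expR_gt0 _)) /= expRN.
have e0 := expR_gt0 (2 * a i); have e_ge := expR_ge1Dx (2 * a i).
rewrite -div1r ler_pdivrMr //.
have : (1 - a i) * (1 + 2 * a i) <= (1 - a i) * expR (2 * a i) by apply: ler_wpM2l; lra.
nra.
Qed.

Section IsolatedVertices.
Variables (d n : nat) (q : nat -> R) (c L : R).
Hypothesis q01 : forall k, (1 <= k <= d)%N -> 0 <= q k <= 1.
Hypothesis n_gt1 : (1 < n)%N.
Hypothesis c0 : 0 <= c.
Hypothesis ce_small : c * expR 1 <= 1/4.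
Hypothesis L0 : 0 <= L.
Hypothesis Ln : L <= n%:R.
Hypothesis q_le : forall k, (1 <= k <= d)%N -> q k <= c * L / n%:R ^+ k.

Local Notation P_iso u := (prob d q (fun x : conf n => isolated_vertex x u)).
Local Notation P_iso2 u v :=
  (prob d q (fun x : conf n => isolated_vertex x u && isolated_vertex x v)).

Let n_gt0 : (0 : R) < n%:R.
Proof. by rewrite ltr0n; lia. Qed.

Let invn_ge0 : (0 : R) <= n%:R^-1.
Proof. by rewrite invr_ge0 ltW. Qed.

Let Ln_le1 : L * n%:R^-1 <= 1.
Proof. by rewrite ler_pdivrMr // mul1r. Qed.

Let c_le : c <= 1/4.
Proof.
apply: le_trans ce_small; rewrite ler_peMr //.
by have := expR_ge1Dx (1 : R); lra.
Qed.

Definition edge_prob_over (T S : {set 'I_n}) : R :=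
  if (T \subset S) && edge_size_ok d S then edge_prob q S else 0.

Lemma edge_prob_over_ge0_le1 T S : 0 <= edge_prob_over T S <= 1.
Proof.
rewrite /edge_prob_over; case: ifP => [/andP[_ /edge_size_ok_dim/q01]|_] //.
by rewrite lexx ler01.
Qed.

Lemma edge_prob_le (S : {set 'I_n}) :
  edge_size_ok d S -> edge_prob q S <= c * L * n%:R^-1 ^+ #|S|.-1.
Proof. by move=> okS; rewrite exprVn; apply: q_le; apply: edge_size_ok_dim. Qed.

(* Summing over the supersets S of T costs a factor
   [\sum_B n^-|B| = (1 + 1/n)^n <= e]. *)
Lemma sum_edge_prob_over_le (T : {set 'I_n}) : (0 < #|T|)%N ->
  \sum_S edge_prob_over T S <= c * L * n%:R^-1 ^+ #|T|.-1 * expR 1.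
Proof.
move=> T_gt0; set t : R := n%:R^-1; set K := c * L * t ^+ #|T|.-1.
have K0 : 0 <= K by rewrite !mulr_ge0 // exprn_ge0.
apply: (@le_trans _ _ (\sum_(S : {set 'I_n} | T \subset S) K * t ^+ #|S :\: T|)).
  rewrite [leRHS]big_mkcond; apply: ler_sum => S _; rewrite /edge_prob_over.
  case: (boolP (T \subset S)) => //= TS; case: ifP => okS; last first.
    by rewrite mulr_ge0 // exprn_ge0.
  apply: (le_trans (edge_prob_le okS)); rewrite -/t /K -[leRHS]mulrA -exprD.
  have -> // : #|S|.-1 = (#|T|.-1 + #|S :\: T|)%N.
  by rewrite cardsD (setIidPr TS); have := subset_leq_card TS; lia.
rewrite -mulr_sumr ler_wpM2l //.
apply: (le_trans (sum_supersets_le _ (fun k => exprn_ge0 k invn_ge0))).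
rewrite sum_expr_card card_ord; apply: (@le_trans _ _ (expR t ^+ n)).
  apply: lerXn2r; rewrite ?nnegrE ?(ltW (expR_gt0 _)) ?addr_ge0 //.
  exact: expR_ge1Dx.
by rewrite -expRM_natl mulfV ?gt_eqF.
Qed.

Lemma edge_prob_over_le_half T S : edge_prob_over T S <= 1/2.
Proof.
rewrite /edge_prob_over; case: ifP => [/andP[_ okS]|_]; last lra.
apply: (le_trans (edge_prob_le okS)).
have t_pow : n%:R^-1 ^+ #|S|.-1 <= n%:R^-1 :> R.
  rewrite -[leRHS]expr1; apply: ler_wiXn2l => //.
    by rewrite invf_le1 // ler1n; lia.
  by case/andP: (edge_size_ok_dim okS).
have Ltk : L * n%:R^-1 ^+ #|S|.-1 <= 1 by apply: le_trans Ln_le1; apply: ler_wpM2l.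
have : c * (L * n%:R^-1 ^+ #|S|.-1) <= c by rewrite -[leRHS]mulr1; apply: ler_wpM2l.
by rewrite mulrA; have := c_le; lra.
Qed.

Lemma prob_isolated (u : 'I_n) :
  P_iso u = \prod_S (1 - edge_prob_over [set u] S).
Proof.
rewrite /isolated_vertex prob_edge_free; apply: eq_bigr => S _.
by rewrite /edge_prob_over sub1set.
Qed.

Lemma prob_isolated_ge (u : 'I_n) : expR (- (L / 2)) <= P_iso u.
Proof.
rewrite prob_isolated; apply: le_trans (prod_1B_ge_expR _) => [|S]; last first.
  by rewrite edge_prob_over_le_half andbT; case/andP: (edge_prob_over_ge0_le1 [set u] S).
rewrite ler_expR lerN2.
have := sum_edge_prob_over_le (T := [set u]); rewrite cards1 expr0 mulr1 => /(_ isT).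
by have := ler_wpM2l L0 ce_small; lra.
Qed.

Lemma prod_edge_prob_over_pair_ge (u v : 'I_n) : u != v ->
  1 - L * n%:R^-1 / 4 <= \prod_S (1 - edge_prob_over [set u; v] S).
Proof.
move=> uv; apply: le_trans (prod_1B_ge (edge_prob_over_ge0_le1 _)).
have := sum_edge_prob_over_le (T := [set u; v]); rewrite cards2 uv expr1 => /(_ isT).
by have := ler_wpM2r (mulr_ge0 L0 invn_ge0) ce_small; lra.
Qed.

(* Edge by edge: [(1 - [u in S] p) (1 - [v in S] p)
                  = (1 - [u or v in S] p) (1 - [u and v in S] p)]. *)
Lemma prob_isolated_pair (u v : 'I_n) :
  P_iso u * P_iso v = P_iso2 u v * \prod_S (1 - edge_prob_over [set u; v] S).
Proof.
rewrite (@eq_prob _ _ _ (fun x => isolated_vertex x u && isolated_vertex x v)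
  (edge_free (fun S => (u \in S) || (v \in S)))); last first.
  move=> x; rewrite /isolated_vertex /edge_free /=.
  apply/andP/forallP => [[/forallP iso_u /forallP iso_v] S|iso_uv].
    by apply/implyP => /orP[/(implyP (iso_u S))|/(implyP (iso_v S))].
  split; apply/forallP => S; apply/implyP => inS.
    by apply: (implyP (iso_uv S)); rewrite inS.
  by apply: (implyP (iso_uv S)); rewrite inS orbT.
rewrite !prob_isolated prob_edge_free -!big_split /=; apply: eq_bigr => S _.
rewrite /edge_prob_over subUset !sub1set.
by case: (u \in S); case: (v \in S); case: (edge_size_ok d S) => /=; lra.
Qed.

Let r_gt0 : 0 < 1 - L * n%:R^-1 / 4.
Proof. by have := Ln_le1; lra. Qed.

Lemma prob_isolated_pair_le (u v : 'I_n) : u != v ->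
  P_iso2 u v <= P_iso u * P_iso v / (1 - L * n%:R^-1 / 4).
Proof.
move=> uv; rewrite ler_pdivlMr // prob_isolated_pair.
by rewrite ler_wpM2l ?prob_ge0 //; apply: prod_edge_prob_over_pair_ge.
Qed.

Lemma sum_prob_isolated_pairs_le :
  \sum_u \sum_v P_iso2 u v <=
  \sum_u P_iso u + (\sum_u P_iso u) ^+ 2 / (1 - L * n%:R^-1 / 4).
Proof.
set r := 1 - L * n%:R^-1 / 4.
have -> : (\sum_u P_iso u) ^+ 2 / r = \sum_u \sum_v P_iso u * P_iso v / r.
  rewrite expr2 mulr_suml mulr_suml; apply: eq_bigr => u _.
  by rewrite mulr_sumr mulr_suml.
rewrite -big_split /=; apply: ler_sum => u _.
rewrite (bigD1 u) //= lerD //; first by apply: le_prob => // x /andP[].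
apply: (@le_trans _ _ (\sum_(v | v != u) P_iso u * P_iso v / r)).
  by apply: ler_sum => v vu; apply: prob_isolated_pair_le; rewrite eq_sym.
apply: ler_sum_subpred => // v.
by rewrite mulr_ge0 ?invr_ge0 ?(ltW r_gt0) // mulr_ge0 ?prob_ge0.
Qed.

Definition num_isolated (x : conf n) : R := \sum_u (isolated_vertex x u)%:R.

Lemma prob_no_isolated_le :
  prob d q (fun x => num_isolated x == 0) <=
  (\sum_u P_iso u)^-1 + (1 - L * n%:R^-1 / 4)^-1 - 1.
Proof.
set mu := \sum_u P_iso u; set r := 1 - L * n%:R^-1 / 4.
have mu_gt0 : 0 < mu.
  have u0 : 'I_n by exists 0%N; lia.
  rewrite /mu (bigD1 u0) //= ltr_pwDl ?sumr_ge0 // => [|v _]; last exact: prob_ge0.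
  exact: lt_le_trans (expR_gt0 _) (prob_isolated_ge u0).
have := second_moment_method q01 num_isolated.
rewrite expect_sum_indicators expect_sqr_sum_indicators -/mu => sm.
rewrite -(ler_pM2r (exprn_gt0 2 mu_gt0)).
have -> : (mu^-1 + r^-1 - 1) * mu ^+ 2 = mu + mu ^+ 2 / r - mu ^+ 2.
  by field; rewrite ?gt_eqF.
by have := sum_prob_isolated_pairs_le; rewrite -/mu -/r; lra.
Qed.

Lemma prob_disconnected_ge :
  1 - (n%:R * expR (- (L / 2)))^-1 - L * n%:R^-1 / 2 <=
  prob d q (fun x : conf n => ~~ top_connected d x).
Proof.
have some_isolated : prob d q (fun x => ~~ (num_isolated x == 0)) <=
    prob d q (fun x : conf n => ~~ top_connected d x).
  apply: le_prob => // x; apply: contraNN => connected_x.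
  rewrite /num_isolated big1 // => u _.
  by rewrite (negbTE (contraTN (isolated_vertex_disconnected d n_gt1) connected_x)).
have mu_ge : n%:R * expR (- (L / 2)) <= \sum_u P_iso u.
  rewrite mulr_natl -[n in _ *+ n]card_ord -sumr_const.
  by apply: ler_sum => u _; apply: prob_isolated_ge.
have inv_mu_le : (\sum_u P_iso u)^-1 <= (n%:R * expR (- (L / 2)))^-1.
  have mu0 : 0 < n%:R * expR (- (L / 2)) by rewrite mulr_gt0 ?expR_gt0.
  by rewrite lef_pV2 ?posrE //; apply: lt_le_trans mu_ge.
have inv_r_le : (1 - L * n%:R^-1 / 4)^-1 - 1 <= L * n%:R^-1 / 2.
  rewrite lerBlDr -[leLHS]mul1r ler_pdivrMr //.
  by have := Ln_le1; have := mulr_ge0 L0 invn_ge0; nra.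
have := prob_add_compl d q (fun x => num_isolated x == 0).
have := prob_no_isolated_le; lra.
Qed.

End IsolatedVertices.

Local Open Scope classical_set_scope.
Local Open Scope ring_scope.

Lemma expR_half_ln (x : R) : 0 < x -> expR (ln x / 2) = Num.sqrt x.
Proof. by move=> x_gt0; rewrite -powR12_sqrt ?ltW // /powR gt_eqF // mulrC. Qed.

Lemma ln_le_subr1 (x : R) : 0 < x -> ln x <= x - 1.
Proof.
by move=> x_gt0; have := @le_ln1Dx R (x - 1); rewrite addrCA subrr addr0; apply; lra.
Qed.

Lemma ln_le_2sqrt (x : R) : 0 < x -> ln x <= 2 * Num.sqrt x.
Proof.
move=> x_gt0; have := ln_le_subr1 (x := Num.sqrt x); rewrite sqrtr_gt0 => /(_ x_gt0).
by rewrite -expR_half_ln // expRK; lra.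
Qed.

Lemma cvg_inv_sqrtn : (fun n : nat => (Num.sqrt n%:R : R)^-1) @ \oo --> (0 : R).
Proof.
apply/gtr0_cvgV0.
  by apply: filterS (nbhs_infty_gt 0) => n n_gt0; rewrite sqrtr_gt0 ltr0n.
apply/cvgryPge => A; apply: filterS (nbhs_infty_ger (A ^+ 2)) => n A2n.
by rewrite (le_trans (ler_norm A)) // -sqrtr_sqr ler_sqrt.
Qed.

Lemma cvg_to1_sqrt_rate (a : nat -> R) (C : R) :
  (\forall n \near \oo, 1 - C / Num.sqrt n%:R <= a n <= 1) -> a @ \oo --> (1 : R).
Proof.
move=> a_near; apply: (squeeze_cvgr a_near); last exact: cvg_cst.
rewrite -[X in _ --> X]subr0 -(mulr0 C).
apply: (@cvgB _ R^o _ _ _ (fun=> 1) (fun n => C / Num.sqrt n%:R)); first exact: cvg_cst.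
exact: cvgMl_tmp cvg_inv_sqrtn.
Qed.

Lemma disconnected_whp (d : nat) (p : nat -> nat -> R) :
  (forall n k, (1 <= k <= d)%N -> 0 <= p n k <= 1) ->
  (\forall n \near \oo, forall k, (1 <= k <= d)%N ->
     p n k <= (4 * expR 1)^-1 * ln n%:R / n%:R ^+ k) ->
  (fun n => prob d (p n) (fun x : conf n => ~~ top_connected d x)) @ \oo --> (1 : R).
Proof.
move=> p01 p_le; apply: (@cvg_to1_sqrt_rate _ 2).
apply: filterS2 p_le (nbhs_infty_ge 2) => n p_le_n n_gt1.
rewrite (prob_le1 (p01 n)) andbT.
have n_gt0 : (0 : R) < n%:R by rewrite ltr0n; lia.
have c0 : (0 : R) <= (4 * expR 1)^-1 by rewrite invr_ge0 mulr_ge0 // ltW ?expR_gt0.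
have ce_small : (4 * expR 1)^-1 * expR 1 <= 1 / 4 :> R.
  by rewrite invfM -mulrA mulVf ?gt_eqF ?expR_gt0 // mulr1 div1r.
have L0 : 0 <= ln (n%:R : R) by rewrite ln_ge0 // ler1n; lia.
have L_le : ln (n%:R : R) <= 2 * Num.sqrt n%:R by apply: ln_le_2sqrt.
have Ln : ln (n%:R : R) <= n%:R by have := ln_le_subr1 n_gt0; lra.
apply: le_trans (prob_disconnected_ge (p01 n) n_gt1 c0 ce_small L0 Ln p_le_n).
set s := Num.sqrt n%:R; have s_gt0 : 0 < s by rewrite sqrtr_gt0.
have n_ss : n%:R = s * s by rewrite -expr2 sqr_sqrtr.
have -> : n%:R * expR (- (ln n%:R / 2)) = s.
  by rewrite expRN expR_half_ln // -/s n_ss mulfK ?gt_eqF.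
have : ln n%:R * n%:R^-1 / 2 <= s^-1.
  have -> : ln n%:R * n%:R^-1 / 2 = ln n%:R / (2 * s) * s^-1.
    by rewrite n_ss; field; rewrite gt_eqF.
  apply: ler_piMl; first by rewrite invr_ge0 ltW.
  by rewrite ler_pdivrMr ?mulr_gt0 // mul1r.
lra.
Qed.

Lemma connected_whp (d : nat) (p : nat -> nat -> R) :
  (forall n k, (1 <= k <= d)%N -> 0 <= p n k <= 1) ->
  (\forall n \near \oo, exists k, (1 <= k <= d)%N /\
     2 * (4 ^ d * d`!)%N%:R * ln n%:R / n%:R ^+ k <= p n k) ->
  (fun n => prob d (p n) (fun x : conf n => top_connected d x)) @ \oo --> (1 : R).
Proof.
move=> p01 p_ge; apply: (@cvg_to1_sqrt_rate _ 2).
apply: filterS2 p_ge (nbhs_infty_ge (maxn (4 * d) 2)) => n [k [kd p_ge_n]].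
rewrite geq_max => /andP[dn n_gt1]; rewrite (prob_le1 (p01 n)) andbT.
have := prob_disconnected_le (p01 n) kd dn n_gt1 p_ge_n.
have := prob_add_compl d (p n) (fun x : conf n => top_connected d x).
set s := Num.sqrt n%:R.
have s_ge1 : 1 <= s by rewrite -sqrtr1 ler_sqrt // ler1n; lia.
have n_ss : n%:R = s * s by rewrite -expr2 sqr_sqrtr.
have : 2 / n%:R <= 2 / s.
  by rewrite ler_pM2l // lef_pV2 ?posrE ?n_ss; nra.
lra.
Qed.

Theorem lemma3p2 (d : nat) (hd : (2 <= d)%N) :
  exists cm cp : R, 0 < cm /\ 0 < cp /\
  (forall p : nat -> nat -> R,
     (forall n k, (1 <= k <= d)%N -> 0 <= p n k <= 1) ->
     (exists N : nat, forall n : nat, (N <= n)%N ->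
        forall k, (1 <= k <= d)%N -> p n k <= cm * ln n%:R / n%:R ^+ k) ->
     (fun n => prob d (p n) (fun x : conf n => ~~ top_connected d x)) @ \oo --> (1 : R)) /\
  (forall p : nat -> nat -> R,
     (forall n k, (1 <= k <= d)%N -> 0 <= p n k <= 1) ->
     (exists N : nat, forall n : nat, (N <= n)%N ->
        exists k, (1 <= k <= d)%N /\ cp * ln n%:R / n%:R ^+ k <= p n k) ->
     (fun n => prob d (p n) (fun x : conf n => top_connected d x)) @ \oo --> (1 : R)).
Proof.
(* The bounds hold for every [d]. *)
exists (4 * expR 1)^-1, (2 * (4 ^ d * d`!)%N%:R).
split; first by rewrite invr_gt0 mulr_gt0 ?expR_gt0.
split; first by rewrite mulr_gt0 // ltr0n muln_gt0 expn_gt0 fact_gt0.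
split=> p p01 [N p_bound].
  by apply: disconnected_whp => //; apply: filterS (nbhs_infty_ge N).
by apply: connected_whp => //; apply: filterS (nbhs_infty_ge N).
Qed.
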